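(* There is no homomorphism $G^2 \to G^1$.
   Context: Graphs are simple and loopless; homomorphisms are edge-preserving vertex maps. $G^1$ is the graph with vertex set $\omega\times\{0,1\}$ whose edges are all pairs $\{(n,i),(m,i)\}$ with $n\ne m$, $i\in\{0,1\}$ and $\lfloor\sqrt n\rfloor=\lfloor\sqrt m\rfloor$, together with all pairs $\{(n,0),(m,1)\}$ with $n<m$. $G^2$ is the graph with vertex set $\{r\}\cup A_1\cup A_2$ (pairwise disjoint), where $A_1$ is the disjoint union of complete graphs $K^1_i$ on $i$ vertices ($i\ge1$) and $A_2$ is the disjoint union of complete graphs $K^2_{x,j}$ on $j$ vertices for $x\in A_1$, $j\ge 1$. The edges of $G^2$ are the edges of all these complete graphs, all pairs $\{r,x\}$ with $x\in A_1$, and all pairs $\{x,y\}$ with $x\in A_1$ and $y\in V(K^2_{x,j})$ for some $j$. *)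

From mathcomp Require Import all_boot.
Set Implicit Arguments. Unset Strict Implicit. Unset Printing Implicit Defensive.

Definition is_hom (V W : Type) (EV : V -> V -> Prop) (EW : W -> W -> Prop)
  (f : V -> W) : Prop := forall u v, EV u v -> EW (f u) (f v).

(* ---------- G^1 : vertices omega x {0,1}; the bool false = 0, true = 1 ---------- *)
Definition V1 := (nat * bool)%type.

Definition E1 (x y : V1) : Prop :=
  let (n, i) := x in let (m, j) := y in
  (i = j /\ n <> m /\ Nat.sqrt n = Nat.sqrt m)
  \/ (i = false /\ j = true /\ (n < m)%coq_nat)
  \/ (j = false /\ i = true /\ (m < n)%coq_nat).

(* ---------- G^2 ----------
   root          = r
   a1 k a        = vertex a of the complete graph K^1_{k+1}   (a : 'I_(k+1))
   a2 k a l b    = vertex b of K^2_{x, l+1} where x = a1 k a  (b : 'I_(l+1)) *)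
Inductive V2 : Type :=
  | root : V2
  | a1 (k : nat) (a : 'I_k.+1) : V2
  | a2 (k : nat) (a : 'I_k.+1) (l : nat) (b : 'I_l.+1) : V2.

(* one orientation of each edge *)
Definition adj2 (u v : V2) : Prop :=
  match u, v with
  | root, a1 _ _ => True
  | a1 k a, a1 k' a' => k = k' /\ nat_of_ord a <> nat_of_ord a'
  | a2 k a l b, a2 k' a' l' b' =>
      k = k' /\ nat_of_ord a = nat_of_ord a' /\ l = l' /\
      nat_of_ord b <> nat_of_ord b'
  | a1 k a, a2 k' a' _ _ => k = k' /\ nat_of_ord a = nat_of_ord a'
  | _, _ => False
  end.

Definition E2 (u v : V2) : Prop := adj2 u v \/ adj2 v u.

(** A vertex [(q,1)] of [G^1] has only finitely many neighbours, and a vertex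
    [(q,0)] has only finitely many neighbours in copy [0]: all of them have
    index below [(q+1)^2].  So such a neighbourhood part holds no arbitrarily
    large cliques.  In [G^2] every vertex [x] of [A_1] has the cliques
    [K^2_{x,j}] in its neighbourhood; homomorphisms preserve this, so a
    homomorphism [f : G^2 -> G^1] maps all of [A_1] into copy [0].  Then the
    cliques [K^1_i], which lie in the neighbourhood of [r], land in the
    copy-[0] part of the neighbourhood of [f r], which is too small. *)

From Pilot Require Import Defs.
From mathcomp Require Import all_boot.
From mathcomp Require Import zify.
From Stdlib Require Import Lia.
From Stdlib Require PeanoNat.

Set Implicit Arguments.
Unset Strict Implicit.
Unset Printing Implicit Defensive.

Definition is_clique (V : Type) (E : V -> V -> Prop) (n : nat) (g : 'I_n -> V) :=
  forall a b, a <> b -> E (g a) (g b).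

Definition large_nbr_cliques (V : Type) (E : V -> V -> Prop) (v : V) :=
  forall K, exists2 g : 'I_K.+1 -> V, is_clique E g & forall a, E v (g a).

Lemma clique_inj (V : Type) (E : V -> V -> Prop) n (g : 'I_n -> V) :
  (forall x, ~ E x x) -> is_clique E g -> injective g.
Proof.
move=> Eirr gcl a b gab; case: (a =P b) => // /gcl.
by rewrite gab => /Eirr.
Qed.

Lemma is_clique_comp (V W : Type) (EV : V -> V -> Prop) (EW : W -> W -> Prop)
    (f : V -> W) n (g : 'I_n -> V) :
  is_hom EV EW f -> is_clique EV g -> is_clique EW (f \o g).
Proof. by move=> fhom gcl a b /gcl /fhom. Qed.

Lemma large_nbr_cliques_hom (V W : Type) (EV : V -> V -> Prop)
    (EW : W -> W -> Prop) (f : V -> W) v :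
  is_hom EV EW f -> large_nbr_cliques EV v -> large_nbr_cliques EW (f v).
Proof.
move=> fhom vcl K; have [g gcl vg] := vcl K.
exists (f \o g); first exact: (is_clique_comp fhom gcl).
by move=> a; exact/fhom/vg.
Qed.

Lemma E1_irrefl x : ~ E1 x x.
Proof. case: x => n i /=; lia. Qed.

Lemma ltn_sqrt_succ_sq n : n < (Nat.sqrt n).+1 ^ 2.
Proof.
have [_ lt_n] := PeanoNat.Nat.sqrt_spec n (le_0_n n).
by rewrite expnS expn1; lia.
Qed.

Lemma E1_nbr_index_bound c y :
  E1 c y -> c.2 || ~~ y.2 -> y.1 < c.1.+1 ^ 2.
Proof.
case: c y => q i [n j] /= Ecy side.
have q_lt := ltn_sqrt_succ_sq q; have n_lt := ltn_sqrt_succ_sq n.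
have sqrt_q_le : Nat.sqrt q <= q by apply/leP; exact: PeanoNat.Nat.sqrt_le_lin.
have sq_le : (Nat.sqrt q).+1 ^ 2 <= q.+1 ^ 2 by rewrite leq_exp2r.
case: Ecy side => [[_ [_ sqrt_eq]] _|[[-> [-> _]] //|[_ [_ /ltP lt_nq]] _]].
- by rewrite -sqrt_eq in n_lt; exact: leq_trans n_lt sq_le.
- exact: leq_trans lt_nq (ltnW (leq_trans q_lt sq_le)).
Qed.

Lemma injective_index_bound n N (g : 'I_n -> V1) :
  injective g -> (forall a, (g a).1 < N) -> n <= N * 2.
Proof.
move=> ginj gN; pose h a : 'I_N * bool := (Ordinal (gN a), (g a).2).
have hinj : injective h.
  move=> a b [ga gb]; apply: ginj.
  by move: (g a) (g b) ga gb => [? ?] [? ?] /= -> ->.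
by have := leq_card h hinj; rewrite card_prod !card_ord card_bool.
Qed.

Lemma E1_nbr_clique_bound c K (g : 'I_K.+1 -> V1) :
  is_clique E1 g -> (forall a, E1 c (g a)) -> (forall a, c.2 || ~~ (g a).2) ->
  K.+1 <= c.1.+1 ^ 2 * 2.
Proof.
move=> gcl cg side; apply: injective_index_bound.
  exact: clique_inj E1_irrefl gcl.
by move=> a; exact: E1_nbr_index_bound.
Qed.

Lemma large_nbr_cliques_E1_side c : large_nbr_cliques E1 c -> c.2 = false.
Proof.
case c2: c.2 => // ccl; have [g gcl cg] := ccl (c.1.+1 ^ 2 * 2).
have side a : c.2 || ~~ (g a).2 by rewrite c2.
by have := E1_nbr_clique_bound gcl cg side; rewrite ltnn.
Qed.

Lemma ord_val_neq n (a b : 'I_n) : a <> b -> nat_of_ord a <> nat_of_ord b.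
Proof. by move=> ab /val_inj. Qed.

Lemma is_clique_A1 k : is_clique E2 (@a1 k).
Proof. by move=> a b /ord_val_neq ab; left. Qed.

Lemma large_nbr_cliques_A1 k a : large_nbr_cliques E2 (@a1 k a).
Proof.
move=> K; exists (@a2 k a K) => [x y /ord_val_neq xy|x]; by left.
Qed.

Theorem claim2 : ~ exists f : V2 -> V1, is_hom E2 E1 f.
Proof.
move=> [f fhom].
have side_A1 k (a : 'I_k.+1) : (f (a1 a)).2 = false.
  exact/large_nbr_cliques_E1_side/(large_nbr_cliques_hom fhom)/large_nbr_cliques_A1.
pose K := (f Defs.root).1.+1 ^ 2 * 2.
suff : K < K by rewrite ltnn.
apply: (@E1_nbr_clique_bound (f Defs.root) K (f \o @a1 K)).
- exact: (is_clique_comp fhom (@is_clique_A1 K)).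
- by move=> a; apply: fhom; left.
- by move=> a /=; rewrite side_A1 orbT.
Qed.
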